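(* Let $S$ be a string of length $n$ over a general ordered alphabet, and let $\mathrm{nss}$ be its next-smaller-suffix array. Then all decreasing runs of $S$ can be computed in $O(n)+t(n)$ time and $O(n)+s(n)$ space, where $t(n)$ and $s(n)$ are the time and space needed to compute $\mathrm{llce}(i,\mathrm{nss}[i])$ and $\mathrm{rlce}(i,\mathrm{nss}[i])$ for all $i\in[1,n]$ with $\mathrm{nss}[i]\ne n+1$.
   Context: Model: word RAM with word size $w\ge\lceil\log_2 n\rceil$. A general ordered alphabet is a totally ordered alphabet on which the order of two symbols can be tested in constant time. For $i\in[1,n+1]$, $S_i=S[i..n]$ ($S_{n+1}$ empty); $\prec$ is the induced lexicographical order. $\mathrm{nss}[i]=\min\{j \mid j=n+1 \text{ or } (j\in(i,n] \text{ and } S_i\succ S_j)\}$. $\mathrm{rlce}(i,j)$ is the length of the longest common prefix of $S_i$ and $S_j$; $\mathrm{llce}(i,j)$ is the length of the longest common suffix of $S[1..i]$ and $S[1..j]$. A positive integer $p$ is a period of $S[i..j]$ if $S[x]=S[x+p]$ for all $x\in[i,j-p]$. A run is a triple $(i,j,p)$ such that $p$ is the smallest period of $S[i..j]$, $j-i+1\ge 2p$, and neither $(i-1,j,p)$ (when $i>1$) nor $(i,j+1,p)$ (when $j<n$) satisfies these properties; it is decreasing if $S_i\succ S_{i+p}$. *)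

From mathcomp Require Import all_boot all_order.
Set Implicit Arguments. Unset Strict Implicit. Unset Printing Implicit Defensive.
Import Order.TTheory.
Local Open Scope order_scope.

(* Strings over a general ordered alphabet (T : orderType), 1-indexed. *)
Section Strings.
Context {disp : Order.disp_t} {T : orderType disp}.
Implicit Types (S : seq T).

Definition sym S (x : nat) : option T := if (0 < x)%N then onth S x.-1 else None.

Definition suf S (i : nat) : seq T := drop i.-1 S.

Fixpoint lex_lt (s t : seq T) : bool :=
  match s, t with
  | [::], [::] => false
  | [::], _ :: _ => true
  | _ :: _, [::] => false
  | a :: s', b :: t' => (a < b) || ((a == b) && lex_lt s' t')
  end.

(* nss[i] = min{ j | j = n+1 or (j in (i,n] and S_i > S_j) } *)
Definition nss S (i : nat) : nat :=
  i.+1 + find (fun j => lex_lt (suf S j) (suf S i)) (iota i.+1 (size S - i)).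

Fixpoint lcp (s t : seq T) : nat :=
  match s, t with
  | a :: s', b :: t' => if a == b then (lcp s' t').+1 else 0
  | _, _ => 0
  end.

Definition rlce S (i j : nat) : nat := lcp (suf S i) (suf S j).
Definition llce S (i j : nat) : nat := lcp (rev (take i S)) (rev (take j S)).

Definition is_period S (i j p : nat) : bool :=
  (0 < p)%N && all (fun x => sym S x == sym S (x + p)) (index_iota i (j - p).+1).

Definition run_cond S (i j p : nat) : bool :=
  [&& (1 <= i)%N, (i <= j)%N, (j <= size S)%N, is_period S i j p,
      all (fun q => ~~ is_period S i j q) (iota 1 p.-1) &
      (2 * p <= j - i + 1)%N].

Definition is_run S (i j p : nat) : bool :=
  [&& run_cond S i j p,
      ~~ ((1 < i)%N && run_cond S i.-1 j p) &
      ~~ ((j < size S)%N && run_cond S i j.+1 p)].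

Definition is_decreasing_run S (i j p : nat) : bool :=
  is_run S i j p && lex_lt (suf S (i + p)) (suf S i).

Definition sym_lt S (a b : nat) : bool :=
  match sym S a, sym S b with Some x, Some y => x < y | _, _ => false end.

End Strings.

(* A word RAM with word size w; symbols are only accessible through a *)
(* constant-time comparison instruction (general ordered alphabet).   *)
Inductive instr : Type :=
  | IConst of nat & nat
  | IAdd of nat & nat & nat
  | ISub of nat & nat & nat      (* r := a - b (truncated) *)
  | IMul of nat & nat & nat
  | IDiv of nat & nat & nat      (* r := a / b  (0 if b = 0) *)
  | ILt of nat & nat & nat
  | IEq of nat & nat & nat
  | ILoad of nat & nat
  | IStore of nat & nat
  | ICmpSym of nat & nat & nat
  | IJz of nat & nat
  | IJmp of nat
  | IOut of nat
  | IHalt.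

Record config := Config {
  pc : nat;
  regs : nat -> nat;
  mem : nat -> nat;
  out : seq nat;
  maxaddr : nat  (* largest memory address accessed so far *)
}.

Definition upd (f : nat -> nat) (a v : nat) : nat -> nat :=
  fun x => if x == a then v else f x.

Definition step (P : seq instr) (slt : nat -> nat -> bool) (w : nat)
    (c : config) : option config :=
  let R := regs c in
  let W v := v %% 2 ^ w in
  let setr r v := Some (Config (pc c).+1 (upd R r v) (mem c) (out c) (maxaddr c)) in
  match nth IHalt P (pc c) with
  | IConst r k => setr r (W k)
  | IAdd r a b => setr r (W (R a + R b))
  | ISub r a b => setr r (R a - R b)
  | IMul r a b => setr r (W (R a * R b))
  | IDiv r a b => setr r (R a %/ R b)
  | ILt r a b => setr r (nat_of_bool (R a < R b)%N)
  | IEq r a b => setr r (nat_of_bool (R a == R b))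
  | ILoad r a => Some (Config (pc c).+1 (upd R r (mem c (R a))) (mem c) (out c)
                              (maxn (maxaddr c) (R a)))
  | IStore a b => Some (Config (pc c).+1 R (upd (mem c) (R a) (R b)) (out c)
                               (maxn (maxaddr c) (R a)))
  | ICmpSym r a b => setr r (nat_of_bool (slt (R a) (R b)))
  | IJz r l => Some (Config (if R r == 0 then l else (pc c).+1) R (mem c) (out c) (maxaddr c))
  | IJmp l => Some (Config l R (mem c) (out c) (maxaddr c))
  | IOut r => Some (Config (pc c).+1 R (mem c) (rcons (out c) (R r)) (maxaddr c))
  | IHalt => None
  end.

Definition halted (P : seq instr) (slt : nat -> nat -> bool) (w : nat) (c : config) : bool :=
  if step P slt w c is None then true else false.

Fixpoint exec (P : seq instr) (slt : nat -> nat -> bool) (w : nat) (t : nat)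
    (c : config) : config :=
  match t with
  | 0 => c
  | t'.+1 => match step P slt w c with Some c' => exec P slt w t' c' | None => c end
  end.

Definition input_mem {disp : Order.disp_t} {T : orderType disp} (S : seq T) : nat -> nat :=
  let n := size S in
  fun a =>
    if a == 0 then n
    else if (a <= n)%N then nss S a
    else if (a <= 2 * n)%N then
      (if nss S (a - n) != n.+1 then llce S (a - n) (nss S (a - n)) else 0)
    else if (a <= 3 * n)%N then
      (if nss S (a - 2 * n) != n.+1 then rlce S (a - 2 * n) (nss S (a - 2 * n)) else 0)
    else 0.

Definition init_config {disp : Order.disp_t} {T : orderType disp} (S : seq T) : config :=
  Config 0 (fun _ => 0) (input_mem S) [::] 0.

Definition outputs_decreasing_runs {disp : Order.disp_t} {T : orderType disp}
    (S : seq T) (o : seq nat) : Prop :=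
  exists L : seq (nat * nat * nat),
    [/\ o = flatten [seq [:: r.1.1; r.1.2; r.2] | r <- L], uniq L &
        forall i j p, ((i, j, p) \in L) = is_decreasing_run S i j p].

From Pilot Require Import Defs.
From mathcomp Require Import all_boot all_order.
From mathcomp Require Import zify.
Set Implicit Arguments. Unset Strict Implicit. Unset Printing Implicit Defensive.
Import Order.TTheory.

(* Fix k with q = nss[k] <= n and put p = q - k, L = llce(k, q), R = rlce(k, q).
   The maximal stretch around k with period p is [k + 1 - L, q + R - 1].  When
   L <= p < L + R it has length at least 2p; a smaller period p' would, with p,
   give the period p - p' and make S_(k+p') < S_k, contradicting the minimality of
   nss[k]; and since S_q < S_k the symbol after the stretch is smaller than the one
   p positions before it, so it is a decreasing run.  Conversely, in a decreasing
   run (i, j, p) let k in [i, i + p) be where the lexicographically least rotation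
   of the period starts.  That rotation is a Lyndon word, so S_k < S_(k+r) for
   0 < r < p, while S_(k+p) < S_k; hence nss[k] = k + p and k reports the run.
   Two positions with the same nss-distance p are at least p apart, so every run
   is reported once, and one left-to-right scan over nss, llce and rlce outputs
   all decreasing runs in O(n) steps. *)

Ltac is_linear_fact P := lazymatch P with
  | is_true (leq _ _) => idtac
  | is_true (leq _ _ && leq _ _) => idtac
  | @eq nat _ _ => idtac
  | ~ (@eq nat _ _) => idtac
  end.

(* [lia] is very slow in the large contexts below: clear every hypothesis that is
   not a linear fact on [nat] first. *)
Ltac arith := repeat match goal with H : ?P |- _ =>
   lazymatch type of P with Prop => idtac end;
   assert_fails (is_linear_fact P); clear H end; lia.

(** * Lexicographic order and Lyndon words *)

Lemma rot_rot_mod T (s : seq T) a b : a < size s -> b < size s ->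
  rot a (rot b s) = rot ((a + b) %% size s) s.
Proof.
move=> a_lt b_lt; rewrite (rot_add_mod (ltnW b_lt) (ltnW a_lt)); case: leqP => [ab_le|ab_gt].
  have [ab_lt|ab_eq] := ltnP (a + b) (size s); first by rewrite modn_small.
  have -> : a + b = size s by arith.
  by rewrite modnn rot_size rot0.
suff -> : (a + b) %% size s = a + b - size s by [].
by rewrite -{1}(subnK (ltnW ab_gt)) modnDr modn_small //; arith.
Qed.

Section LexOrder.
Context {disp : Order.disp_t} {T : orderType disp}.
Implicit Types g s u v x y : seq T.

Lemma lex_ltE s u : lex_lt s u = (s < u :> seqlexi T)%O.
Proof. by elim: s u => [|a s IH] [|b u] //=; rewrite ltxi_cons IH; case: ltgtP. Qed.

Lemma lex_ltxx s : ~~ lex_lt s s.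
Proof. by rewrite lex_ltE ltxx. Qed.

Lemma lex_lt_trans u s v : lex_lt s u -> lex_lt u v -> lex_lt s v.
Proof. rewrite !lex_ltE; exact: lt_trans. Qed.

Lemma lex_lt_asym s u : lex_lt s u -> ~~ lex_lt u s.
Proof. by rewrite !lex_ltE => /lt_gtF ->. Qed.

Lemma lex_lt_total s u : s != u -> lex_lt s u || lex_lt u s.
Proof. rewrite !lex_ltE; exact: (@lt_total _ (seqlexi T)). Qed.

Lemma lex_lt_cat2l s u v : lex_lt (s ++ u) (s ++ v) = lex_lt u v.
Proof. by elim: s => //= a s ->; rewrite ltxx eqxx. Qed.

Lemma lex_lt_catr s u x y :
  size s = size u -> lex_lt s u -> lex_lt (s ++ x) (u ++ y).
Proof.
elim: s u => [|a s IH] [|b u] //= [/IH su] /orP[-> // | /andP[-> /su ->]].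
by rewrite orbT.
Qed.

Lemma lyndon_take_lt_drop g r :
    (forall r', r' < size g -> ~~ lex_lt (rot r' g) g) ->
    rot r g != g -> 0 < r < size g ->
  lex_lt (take (size g - r) g) (drop r g).
Proof.
(* Were the conclusion false, either drop r g < take s g, whence rot r g < g, or
   g = B C = A B with B = drop r g, whence g < rot r g = B A gives C < A and so
   rot s g = C B < g. *)
move=> gmin grot /andP[r_gt0 r_lt]; set s := size g - r.
have size_drop_r : size (drop r g) = s by rewrite size_drop.
have size_take_s : size (take s g) = s by rewrite size_takel ?leq_subr.
have g_lt_rot : lex_lt g (rot r g).
  by move: (lex_lt_total grot); rewrite (negbTE (gmin r r_lt)).
have [border|] := eqVneq (take s g) (drop r g); last first.
  case/lex_lt_total/orP => // lt_drop; case/negP: (gmin r r_lt).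
  rewrite /rot -[X in lex_lt _ X](cat_take_drop s).
  by apply: lex_lt_catr; rewrite ?size_drop_r ?size_take_s.
have lt_rest : lex_lt (drop s g) (take r g).
  by move: g_lt_rot; rewrite /rot -{1}(cat_take_drop s g) border lex_lt_cat2l.
have s_lt : s < size g by rewrite /s; arith.
case/negP: (gmin s s_lt).
rewrite /rot border -[X in lex_lt _ X](cat_take_drop r g).
by apply: lex_lt_catr; rewrite // size_drop size_takel; arith.
Qed.

End LexOrder.

Section CommonPrefix.
Context {disp : Order.disp_t} {T : orderType disp}.
Variable x0 : T.
Implicit Types s u : seq T.

Lemma lcp_leq s u : lcp s u <= size s /\ lcp s u <= size u.
Proof. by elim: s u => [|a s IH] [|b u] //=; case: eqP => // _; case: (IH u). Qed.

Lemma nth_lcp s u t : t < lcp s u -> nth x0 s t = nth x0 u t.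
Proof.
elim: s u t => [|a s IH] [|b u] [|t] //=; case: eqP => // _; exact: IH.
Qed.

Lemma lcp_stop s u : [\/ lcp s u = size s, lcp s u = size u |
  nth x0 s (lcp s u) != nth x0 u (lcp s u)].
Proof.
elim: s u => [|a s IH] [|b u] /=; try by constructor.
case: eqP => [_|/eqP ne]; last by constructor.
by case: (IH u) => [->|->|]; constructor.
Qed.

Lemma lcpE m s u : m <= size s -> m <= size u ->
    (forall t, t < m -> nth x0 s t = nth x0 u t) ->
    [\/ m = size s, m = size u | nth x0 s m != nth x0 u m] ->
  lcp s u = m.
Proof.
elim: m s u => [|m IH] [|a s] [|b u] //= ms mu agree stop.
- by case: stop => // /negbTE ->.
- have /= -> := agree 0 isT; rewrite eqxx; congr S; apply: IH => // [t tm|].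
    exact: (agree t.+1).
  by case: stop => [[->]|[->]|]; constructor.
Qed.

End CommonPrefix.

(** * Suffixes, periods and longest common extensions *)

Section Suffixes.
Context {disp : Order.disp_t} {T : orderType disp}.
Variables (x0 : T) (S : seq T).
Local Notation n := (size S).

Definition ch x := nth x0 S x.-1.

Lemma sym_ch x : 1 <= x <= n -> sym S x = Some (ch x).
Proof. by case/andP=> x1 xn; rewrite /sym x1 onthE (nth_map x0) // prednK. Qed.

Lemma size_suf i : 1 <= i -> size (suf S i) = n.+1 - i.
Proof. by move=> i1; rewrite /suf size_drop; arith. Qed.

Lemma nth_suf i t : 1 <= i -> nth x0 (suf S i) t = ch (i + t).
Proof. by move=> i1; rewrite /suf nth_drop /ch; congr nth; arith. Qed.

Lemma suf_cons i : 1 <= i <= n -> suf S i = ch i :: suf S i.+1.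
Proof. by case/andP=> i1 iin; rewrite /suf (drop_nth x0) ?prednK //; arith. Qed.

Lemma suf_size : suf S n.+1 = [::].
Proof. exact: drop_size. Qed.

Lemma drop_suf i m : 1 <= i -> drop m (suf S i) = suf S (i + m).
Proof. by move=> i1; rewrite /suf drop_drop; congr drop; arith. Qed.

Lemma take_suf_eq a b m : 1 <= a -> 1 <= b -> a + m <= n.+1 -> b + m <= n.+1 ->
    (forall t, t < m -> ch (a + t) = ch (b + t)) ->
  take m (suf S a) = take m (suf S b).
Proof.
move=> a1 b1 am bm agree; apply: (@eq_from_nth _ x0).
  by rewrite !size_takel ?size_suf //; arith.
move=> t; rewrite size_takel ?size_suf; [|arith|arith] => tm.
by rewrite !nth_take // !nth_suf // agree.
Qed.

Lemma window_succ x m : 1 <= x -> 0 < m -> x + m <= n -> ch x = ch (x + m) ->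
  take m (suf S x.+1) = rot 1 (take m (suf S x)).
Proof.
move=> x1 m_gt0 xm eq_xm; rewrite (@suf_cons x); last by arith.
rewrite -(prednK m_gt0) /= rot1_cons (take_nth x0); last by rewrite size_suf; arith.
by rewrite nth_suf // eq_xm; congr (rcons _ (ch _)); arith.
Qed.

Lemma size_rev_take k : k <= n -> size (rev (take k S)) = k.
Proof. by move=> kn; rewrite size_rev size_takel. Qed.

Lemma nth_rev_take k t : t < k -> k <= n -> nth x0 (rev (take k S)) t = ch (k - t).
Proof.
move=> tk kn; rewrite nth_rev size_takel //.
by rewrite nth_take /ch; [congr nth|]; arith.
Qed.

Definition per s e d := forall z, s <= z -> z + d <= e -> ch z = ch (z + d).

Lemma is_periodP i j p : 1 <= i -> j <= n ->
  reflect (0 < p /\ per i j p) (is_period S i j p).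
Proof.
move=> i1 jn; rewrite /is_period.
apply: (iffP andP) => -[p_gt0 Hper]; split=> //.
- move=> x ix xj.
  have /(allP Hper)/eqP : x \in index_iota i (j - p).+1 by rewrite mem_index_iota; arith.
  by rewrite !sym_ch; [case| arith | arith].
- apply/allP=> x; rewrite mem_index_iota => /andP[ix xj].
  rewrite !sym_ch; [|arith|arith]; rewrite Hper // ; arith.
Qed.

Lemma per_sub s e d s' e' : per s e d -> s <= s' -> e' <= e -> per s' e' d.
Proof. by move=> Hper ss' e'e z sz ze; apply: Hper; arith. Qed.

Lemma per_sub_period s e p q : per s e p -> per s e q ->
  0 < q < p -> p + q <= e.+1 - s -> per s e (p - q).
Proof.
move=> Hp Hq /andP[q_gt0 qp] len z sz ze.
have [zp_le|zp_gt] := leqP (z + p) e.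
  by rewrite Hp // (Hq (z + (p - q))); [congr ch|..]; arith.
have -> : ch z = ch (z - q) by rewrite (Hq (z - q)); [congr ch|..]; arith.
by rewrite Hp; [congr ch|..]; arith.
Qed.

Definition falls_after e d := (e == n) || (e < n) && (ch e.+1 < ch (e.+1 - d))%O.

Lemma lex_lt_shiftE x e d : 1 <= x -> 0 < d -> x + d <= e.+1 -> e <= n ->
    per x e d -> (e < n -> ch e.+1 != ch (e.+1 - d)) ->
  lex_lt (suf S (x + d)) (suf S x) = falls_after e d.
Proof.
move=> x1 d_gt0 xde en Hper stop; set m := e.+1 - (x + d).
rewrite -(cat_take_drop m (suf S x)) -(cat_take_drop m (suf S (x + d))).
rewrite (@take_suf_eq (x + d) x); [|arith|arith|arith|arith|]; last first.
  by move=> t tm; rewrite addnAC -Hper //; arith.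
rewrite lex_lt_cat2l !drop_suf; [|arith|arith].
have -> : x + d + m = e.+1 by arith.
have -> : x + m = e.+1 - d by arith.
rewrite /falls_after (@suf_cons (e.+1 - d)); last by arith.
have [e_lt|e_eq] := ltnP e n.
  rewrite (@suf_cons e.+1); last by arith.
  by rewrite ltn_eqF //= (negbTE (stop e_lt)) /= orbF.
have -> : e = n by arith.
by rewrite suf_size eqxx.
Qed.

Lemma lex_lt_shift x e d : 1 <= x -> 0 < d -> x + d <= e.+1 -> e <= n ->
  per x e d -> falls_after e d -> lex_lt (suf S (x + d)) (suf S x).
Proof.
move=> x1 d_gt0 xde en Hper falls; rewrite (@lex_lt_shiftE x e d) // => e_lt.
by move: falls; rewrite /falls_after ltn_eqF //= e_lt => /lt_eqF ->.
Qed.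

Lemma nss_spec k : 1 <= k <= n ->
  [/\ k < nss S k <= n.+1,
      nss S k <= n -> lex_lt (suf S (nss S k)) (suf S k) &
      forall j, k < j < nss S k -> ~~ lex_lt (suf S j) (suf S k)].
Proof.
case/andP=> k1 kn; rewrite /nss.
set P := (fun j => _); set s := iota _ _.
have size_s : size s = n - k by rewrite size_iota.
have := find_size P s; rewrite size_s => find_le.
split; first by arith.
- move=> q_le; have has_s : has P s by rewrite has_find size_s; arith.
  by have := nth_find 0 has_s; rewrite nth_iota //; arith.
- move=> j /andP[kj jq]; have j_before : j - k.+1 < find P s by arith.
  have := before_find 0 j_before; rewrite nth_iota; last by arith.
  by rewrite /P subnKC // => ->.
Qed.

Lemma nss_eq k q : 1 <= k -> k < q <= n -> lex_lt (suf S q) (suf S k) ->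
  (forall j, k < j < q -> ~~ lex_lt (suf S j) (suf S k)) -> nss S k = q.
Proof.
move=> k1 /andP[kq qn] q_lt q_min.
have [/andP[k_lt _] nss_lt nss_min] := nss_spec (k := k) (ltac:(arith)).
case: (ltngtP (nss S k) q) => // H.
- by move: (nss_lt ltac:(arith)) (q_min (nss S k) ltac:(arith)) => ->.
- by move: (nss_min q ltac:(arith)); rewrite q_lt.
Qed.

Lemma llce_leq k q : k <= n -> llce S k q <= k.
Proof.
move=> kn; rewrite /llce -{2}(size_rev_take kn).
by case: (lcp_leq (rev (take k S)) (rev (take q S))).
Qed.

Lemma rlce_leq k q : 1 <= q -> rlce S k q <= n.+1 - q.
Proof. by move=> q1; rewrite /rlce -size_suf //; case: (lcp_leq (suf S k) (suf S q)). Qed.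

Lemma llce_spec k q : 1 <= k -> k < q -> q <= n ->
  (forall t, t < llce S k q -> ch (k - t) = ch (q - t)) /\
  (llce S k q = k \/ ch (k - llce S k q) != ch (q - llce S k q)).
Proof.
move=> k1 kq qn; have L_le : llce S k q <= k by apply: llce_leq; arith.
rewrite /llce in L_le *; split.
  by move=> t tL; have := nth_lcp x0 tL; rewrite !nth_rev_take //; arith.
case: (lcp_stop x0 (rev (take k S)) (rev (take q S))); rewrite ?size_rev_take;
  [by left | arith | arith | arith | ].
have [L_lt|] := ltnP (lcp (rev (take k S)) (rev (take q S))) k; last by left; arith.
by rewrite !nth_rev_take //; [move=> ?; right | arith ..].
Qed.

Lemma rlce_spec k q : 1 <= k -> k < q -> q <= n ->
  (forall t, t < rlce S k q -> ch (k + t) = ch (q + t)) /\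
  (rlce S k q = n.+1 - q \/ ch (k + rlce S k q) != ch (q + rlce S k q)).
Proof.
move=> k1 kq qn; have R_le : rlce S k q <= n.+1 - q by apply: rlce_leq; arith.
rewrite /rlce in R_le *; split.
  by move=> t tR; have := nth_lcp x0 tR; rewrite !nth_suf //; arith.
case: (lcp_stop x0 (suf S k) (suf S q)); rewrite ?size_suf; [arith | arith | by left | arith | ].
by rewrite !nth_suf //; [move=> ?; right | arith ..].
Qed.

(** * Runs reported by a scan over next smaller suffixes *)

Definition nss_run k : option (nat * nat * nat) :=
  let q := nss S k in let L := llce S k q in let R := rlce S k q in
  if q == n.+1 then None
  else if q - k < L then None
  else if q - k < L + R then Some (k.+1 - L, q + R - 1, q - k)
  else None.

Lemma run_condP i j p : reflect
  [/\ 1 <= i <= j, j <= n, 0 < p /\ per i j p,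
      forall q, 0 < q < p -> ~ per i j q & 2 * p <= j - i + 1]
  (run_cond S i j p).
Proof.
apply: (iffP idP) => [/and5P[i1 ij jn Hp /andP[/allP minp len]]|].
  split=> //; [by rewrite i1 | exact/(is_periodP _ i1 jn) |].
  move=> q /andP[q_gt0 qp] Hq.
  have /minp/negP : q \in iota 1 p.-1 by rewrite mem_iota; arith.
  by apply; apply/(is_periodP _ i1 jn).
case=> /andP[i1 ij] jn Hp minp len; rewrite /run_cond i1 ij jn len andbT /=.
apply/andP; split; first exact/(is_periodP _ i1 jn).
apply/allP=> q; rewrite mem_iota => q_range; apply/negP.
by move/(is_periodP _ i1 jn) => [q_gt0]; apply: minp; arith.
Qed.

Lemma run_cond_predE i j p : 1 < i -> run_cond S i j p ->
  run_cond S i.-1 j p = (ch i.-1 == ch (i.-1 + p)).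
Proof.
move=> i2 /run_condP[/andP[_ ij] jn [p_gt0 Hp] minp len].
apply/run_condP/eqP => [[_ _ [_ Hp'] _ _]|eq_ip]; first by apply: Hp'; arith.
split=> //; [arith | split=> // z zi zj | | arith].
  by case: (ltnP z i) => [?|iz]; [have -> : z = i.-1 by arith | exact: Hp].
by move=> q qp Hq; apply: (minp q qp); apply: (per_sub Hq); arith.
Qed.

Lemma run_cond_succE i j p : j < n -> run_cond S i j p ->
  run_cond S i j.+1 p = (ch j.+1 == ch (j.+1 - p)).
Proof.
move=> jn /run_condP[/andP[i1 ij] _ [p_gt0 Hp] minp len].
apply/run_condP/eqP => [[_ _ [_ Hp'] _ _]|eq_jp].
  by symmetry; rewrite Hp' ?subnK //; arith.
split=> //; [arith | split=> // z iz zj | | arith].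
  case: (leqP (z + p) j) => [?|?]; first exact: Hp.
  have -> : z = j.+1 - p by arith.
  by rewrite subnK //; arith.
by move=> q qp Hq; apply: (minp q qp); apply: (per_sub Hq); arith.
Qed.

Lemma is_runE i j p : is_run S i j p = [&& run_cond S i j p,
  (1 < i) ==> (ch i.-1 != ch (i.-1 + p)) & (j < n) ==> (ch j.+1 != ch (j.+1 - p))].
Proof.
rewrite /is_run; case rc: (run_cond S i j p) => //=.
by case: (ltnP 1 i) => [i2|_]; case: (ltnP j n) => [jn|_];
  rewrite /= ?run_cond_predE ?run_cond_succE.
Qed.

Section Soundness.
Variable k : nat.
Hypotheses (k_in : 1 <= k <= n) (nss_le : nss S k <= n).
Local Notation q := (nss S k).
Local Notation p := (q - k).
Local Notation L := (llce S k q).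
Local Notation R := (rlce S k q).
Hypothesis L_range : L <= p < L + R.
Local Notation s := (k.+1 - L).
Local Notation e := (q + R - 1).

Let k1 : 1 <= k. Proof. by case/andP: k_in. Qed.
Let k_lt : k < q. Proof. by case: (nss_spec k_in) => /andP[]. Qed.
Let q_lt_k : lex_lt (suf S q) (suf S k). Proof. by case: (nss_spec k_in) => _ /(_ nss_le). Qed.
Let q_min j : k < j < q -> ~~ lex_lt (suf S j) (suf S k).
Proof. by case: (nss_spec k_in) => _ _; apply. Qed.
Let L_le : L <= k. Proof. by apply: llce_leq; case/andP: k_in. Qed.
Let R_le : R <= n.+1 - q. Proof. by apply: rlce_leq; arith. Qed.

Lemma llce_nss_gt0 : 0 < L.
Proof.
have [_ [|L_stop]] := llce_spec k1 k_lt nss_le; first by arith.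
have [R_agree _] := rlce_spec k1 k_lt nss_le.
case: (posnP L) L_stop => // -> /eqP; rewrite !subn0 => ne_kq.
case: (posnP R) L_range => [|R_gt0]; first by arith.
by move: (R_agree 0 R_gt0); rewrite !addn0.
Qed.

Let L_gt0 := llce_nss_gt0.

Lemma nss_span_per : per s e p.
Proof.
have [L_agree _] := llce_spec k1 k_lt nss_le.
have [R_agree _] := rlce_spec k1 k_lt nss_le.
move=> z sz ze; case: (leqP z k) => zk.
  have -> : z + p = q - (k - z) by arith.
  by rewrite -L_agree; [congr ch | ]; arith.
have -> : z + p = q + (z - k) by arith.
by rewrite -R_agree; [congr ch | ]; arith.
Qed.

Lemma nss_span_stop_left : 1 < s -> ch s.-1 != ch (s.-1 + p).
Proof.
have [_ [|L_stop]] := llce_spec k1 k_lt nss_le; first by arith.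
have -> : s.-1 = k - L by arith.
by have -> : k - L + p = q - L by arith.
Qed.

Lemma nss_span_stop_right : e < n -> ch e.+1 != ch (e.+1 - p).
Proof.
have [_ [|R_stop]] := rlce_spec k1 k_lt nss_le; first by arith.
have -> : e.+1 = q + R by arith.
have -> : q + R - p = k + R by arith.
by rewrite eq_sym.
Qed.

Lemma nss_span_falls : falls_after e p.
Proof.
have per_k : per k e p by apply: (per_sub nss_span_per); arith.
rewrite -(@lex_lt_shiftE k e p k1 ltac:(arith) ltac:(arith) ltac:(arith) per_k).
  by rewrite subnKC // ltnW.
exact: nss_span_stop_right.
Qed.

Lemma nss_span_no_shorter_period r : 0 < r < p -> ~ per s e r.
Proof.
move=> r_range per_r.
have per_pr := per_sub_period nss_span_per per_r r_range ltac:(arith).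
have falls_r : falls_after e r.
  move: nss_span_falls; rewrite /falls_after.
  have [e_lt|e_ge] := ltnP e n; last first.
    by have -> : e = n by arith.
  rewrite (per_pr (e.+1 - p)); [|arith|arith].
  by have -> : e.+1 - p + (p - r) = e.+1 - r by arith.
have per_kr : per k e r by apply: (per_sub per_r); arith.
have := lex_lt_shift k1 _ _ _ per_kr falls_r.
by rewrite (negbTE (q_min _)) //; arith.
Qed.

Lemma nss_span_decreasing_run : is_decreasing_run S s e p.
Proof.
rewrite /is_decreasing_run is_runE; apply/andP; split; last first.
  by apply: lex_lt_shift nss_span_per nss_span_falls; arith.
apply/and3P; split.
- apply/run_condP; split; [arith|arith| |exact: nss_span_no_shorter_period|arith].
  by split; [arith|exact: nss_span_per].
- by apply/implyP; apply: nss_span_stop_left.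
- by apply/implyP; apply: nss_span_stop_right.
Qed.

End Soundness.

Section Completeness.
Variables i j p : nat.
Hypothesis drun : is_decreasing_run S i j p.

Let rc : run_cond S i j p.
Proof. by move: drun; rewrite /is_decreasing_run is_runE => /andP[/and3P[]]. Qed.
Let i_le_j : 1 <= i <= j. Proof. by case/run_condP: rc. Qed.
Let i1 : 1 <= i. Proof. by case/andP: i_le_j. Qed.
Let j_le : j <= n. Proof. by case/run_condP: rc. Qed.
Let p_gt0 : 0 < p. Proof. by case/run_condP: rc => _ _ []. Qed.
Let per_ij : per i j p. Proof. by case/run_condP: rc => _ _ []. Qed.
Let p_min r : 0 < r < p -> ~ per i j r. Proof. by case/run_condP: rc => _ _ _ minp _; apply: minp. Qed.
Let len : 2 * p <= j - i + 1. Proof. by case/run_condP: rc. Qed.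
Let stop_left : 1 < i -> ch i.-1 != ch (i.-1 + p).
Proof. by move: drun; rewrite /is_decreasing_run is_runE => /andP[/and3P[_ /implyP]]. Qed.
Let stop_right : j < n -> ch j.+1 != ch (j.+1 - p).
Proof. by move: drun; rewrite /is_decreasing_run is_runE => /andP[/and3P[_ _ /implyP]]. Qed.
Let falls : falls_after j p.
Proof.
case/andP: drun => _.
by rewrite (@lex_lt_shiftE i j p) //; arith.
Qed.

Lemma ch_mod d : i + d <= j -> ch (i + d) = ch (i + d %% p).
Proof.
elim/ltn_ind: d => d IH id_le; case: (ltnP d p) => [dp|pd]; first by rewrite modn_small.
rewrite -(subnK pd) addnA -per_ij; [|arith|arith].
by rewrite IH ?modnDr //; arith.
Qed.

Local Notation W := (take p (suf S i)).

Let size_W : size W = p. Proof. by rewrite size_takel // size_suf; arith. Qed.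

Lemma window_rot r : r <= p -> take p (suf S (i + r)) = rot r W.
Proof.
elim: r => [|r IH] rp; first by rewrite addn0 rot0.
rewrite addnS window_succ; [|arith|arith|arith|by apply: per_ij; arith].
by rewrite IH 1?ltnW // (@rotS _ r) ?size_W.
Qed.

Lemma ch_rot_window a : a < p -> ch (i + a) = nth x0 (rot a W) 0.
Proof.
move=> ap; rewrite -window_rot ?(ltnW ap) // nth_take // nth_suf ?addn0 //.
by rewrite addn_gt0 i1.
Qed.

Lemma rot_window_per r : r < p -> rot r W = W -> per i j r.
Proof.
move=> rp fixW z iz zj; set d := z - i.
have ch_z : ch z = ch (i + d %% p) by rewrite -ch_mod /d ?subnKC //; arith.
have ch_zr : ch (z + r) = ch (i + (d + r) %% p).
  by rewrite -ch_mod; [congr ch | ]; arith.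
have rot_mod : rot (d %% p) (rot r W) = rot ((d %% p + r) %% p) W.
  by rewrite rot_rot_mod size_W // ltn_mod.
rewrite ch_z ch_zr -modnDml !ch_rot_window ?ltn_mod //.
by rewrite -rot_mod fixW.
Qed.

Let r0 : 'I_p := [arg min_(r < Ordinal p_gt0) (rot r W : seqlexi T)]%O.
Local Notation k0 := (i + r0).
Let r0_lt : r0 < p := ltn_ord r0.

Let r0_min r : r < p -> ~~ lex_lt (rot r W) (rot r0 W).
Proof.
move=> rp; rewrite lex_ltE -leNgt /r0.
by case: arg_minP => // m _ /(_ (Ordinal rp)); apply.
Qed.

Lemma lex_lt_min_rot_suf r : 0 < r < p -> lex_lt (suf S k0) (suf S (k0 + r)).
Proof.
move=> r_range; set g := take p (suf S k0).
have g_rot : g = rot r0 W by rewrite /g window_rot // ltnW.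
have size_g : size g = p by rewrite g_rot size_rot.
have g_min r' : r' < size g -> ~~ lex_lt (rot r' g) g.
  by rewrite size_g => r'p; rewrite g_rot rot_rot_mod size_W // r0_min // ltn_mod.
have g_prim : rot r g != g.
  apply/eqP; rewrite g_rot rot_rot => /rot_inj fixW.
  by apply: (p_min r_range); apply: rot_window_per fixW; arith.
have take_g : take (p - r) g = take (p - r) (suf S k0) by rewrite take_takel ?leq_subr.
have drop_g : drop r g = take (p - r) (suf S (k0 + r)).
  have r_le : r <= p by case/andP: r_range => _ /ltnW.
  by rewrite /g -{1}(subnK r_le) -take_drop drop_suf // addn_gt0 i1.
have := lyndon_take_lt_drop g_min g_prim; rewrite size_g take_g drop_g => /(_ r_range) lt_g.
rewrite -(cat_take_drop (p - r) (suf S k0)) -(cat_take_drop (p - r) (suf S (k0 + r))).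
by apply: lex_lt_catr lt_g; rewrite !size_takel ?size_suf; arith.
Qed.

Lemma nss_min_rot : nss S k0 = k0 + p.
Proof.
apply: nss_eq; [arith | arith | |].
  by apply: (@lex_lt_shift k0 j p) => //; [arith | arith | apply: (per_sub per_ij); arith].
move=> z /andP[kz zkp]; apply: lex_lt_asym.
have -> : z = k0 + (z - k0) by arith.
by apply: lex_lt_min_rot_suf; arith.
Qed.

Lemma llce_min_rot : llce S k0 (k0 + p) = k0.+1 - i.
Proof.
have size_k : size (rev (take k0 S)) = k0 by rewrite size_rev_take; arith.
have size_kp : size (rev (take (k0 + p)  S)) = k0 + p by rewrite size_rev_take; arith.
rewrite /llce; apply: (lcpE (x0 := x0)); rewrite ?size_k ?size_kp; [arith | arith | |].
  move=> t tm; rewrite !nth_rev_take; [|arith|arith|arith|arith].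
  have -> : k0 + p - t = k0 - t + p by arith.
  by apply: per_ij; arith.
have [i_gt1|i_le1] := ltnP 1 i; last by constructor 1; arith.
constructor 3; rewrite !nth_rev_take; [|arith|arith|arith|arith].
have -> : k0 - (k0.+1 - i) = i.-1 by arith.
have -> : k0 + p - (k0.+1 - i) = i.-1 + p by arith.
by apply: stop_left.
Qed.

Lemma rlce_min_rot : rlce S k0 (k0 + p) = j.+1 - (k0 + p).
Proof.
have size_k : size (suf S k0) = n.+1 - k0 by rewrite size_suf; arith.
have size_kp : size (suf S (k0 + p)) = n.+1 - (k0 + p) by rewrite size_suf; arith.
rewrite /rlce; apply: (lcpE (x0 := x0)); rewrite ?size_k ?size_kp; [arith | arith | |].
  move=> t tm; rewrite !nth_suf; [|arith|arith].
  have -> : k0 + p + t = k0 + t + p by arith.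
  by apply: per_ij; arith.
have [j_lt|j_ge] := ltnP j n; last by constructor 2; arith.
constructor 3; rewrite !nth_suf; [|arith|arith].
have -> : k0 + (j.+1 - (k0 + p)) = j.+1 - p by arith.
have -> : k0 + p + (j.+1 - (k0 + p)) = j.+1 by arith.
by rewrite eq_sym; apply: stop_right.
Qed.

Lemma decreasing_run_complete : exists2 k, 1 <= k <= n & nss_run k = Some (i, j, p).
Proof.
exists k0; first by arith.
rewrite /nss_run nss_min_rot llce_min_rot rlce_min_rot addKn.
have -> : (k0 + p == n.+1) = false by apply/negbTE; arith.
rewrite ifF; last by apply/negbTE; rewrite -leqNgt; arith.
by rewrite ifT; [congr (Some (_, _, _)); arith | arith].
Qed.

End Completeness.

Lemma suf_lex_lt_total a b : 1 <= a < b -> b <= n.+1 ->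
  lex_lt (suf S a) (suf S b) || lex_lt (suf S b) (suf S a).
Proof.
move=> ab bn; apply: lex_lt_total; apply/eqP => /(congr1 size).
by rewrite !size_suf; arith.
Qed.

Lemma nss_shift_gap k1 k2 d : 1 <= k1 < k2 -> k1 + d <= n ->
  nss S k1 = k1 + d -> nss S k2 = k2 + d -> k1 + d <= k2.
Proof.
move=> k12 k1d_le nss1 nss2; rewrite leqNgt; apply/negP => k2_lt.
have [_ lt1 min1] := nss_spec (k := k1) ltac:(arith).
have [_ _ min2] := nss_spec (k := k2) ltac:(arith).
rewrite nss1 in lt1 min1; rewrite nss2 in min2.
have lt12 : lex_lt (suf S k1) (suf S k2).
  by move: (suf_lex_lt_total k12 ltac:(arith)); rewrite (negbTE (min1 _ _)) ?orbF //; arith.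
have lt2d : lex_lt (suf S k2) (suf S (k1 + d)).
  move: (suf_lex_lt_total (a := k2) (b := k1 + d) ltac:(arith) ltac:(arith)).
  by rewrite (negbTE (min2 _ _)) ?orbF //; arith.
by move: (lex_lt_trans lt12 (lex_lt_trans lt2d (lt1 k1d_le))); rewrite (negbTE (lex_ltxx _)).
Qed.

Lemma nss_run_sound k t : 1 <= k <= n -> nss_run k = Some t ->
  is_decreasing_run S t.1.1 t.1.2 t.2.
Proof.
move=> k_in; rewrite /nss_run; case: eqP => // q_ne.
case: ltnP => // Lp; case: ltnP => // pLR [<-] /=.
have [/andP[_ q_le] _ _] := nss_spec k_in.
by apply: nss_span_decreasing_run; rewrite ?Lp //; arith.
Qed.

Lemma nss_run_inj k1 k2 t : 1 <= k1 <= n -> 1 <= k2 <= n ->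
  nss_run k1 = Some t -> nss_run k2 = Some t -> k1 = k2.
Proof.
wlog k12 : k1 k2 / k1 < k2.
  move=> wlog_lt k1_in k2_in e1 e2.
  by case: (ltngtP k1 k2) => // [lt|gt]; [apply: wlog_lt | symmetry; apply: wlog_lt].
move=> k1_in k2_in; rewrite /nss_run.
case: eqP => // q1_ne; case: ltnP => // Lp1; case: ltnP => // pLR1 [<-].
case: eqP => // q2_ne; case: ltnP => // Lp2; case: ltnP => // pLR2 [eL _ ep].
have [/andP[q1_gt q1_le] _ _] := nss_spec k1_in.
have [/andP[q2_gt q2_le] _ _] := nss_spec k2_in.
have q1_le' : nss S k1 <= n by arith.
have q2_le' : nss S k2 <= n by arith.
have L1_gt0 := llce_nss_gt0 k1_in q1_le' (introT andP (conj Lp1 pLR1)).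
have L2_le : llce S k2 (nss S k2) <= k2 by apply: llce_leq; arith.
have := @nss_shift_gap k1 k2 (nss S k1 - k1) ltac:(arith) ltac:(arith) ltac:(arith) ltac:(arith).
arith.
Qed.

Lemma mem_nss_runs i j p :
  ((i, j, p) \in pmap nss_run (iota 1 n)) = is_decreasing_run S i j p.
Proof.
rewrite mem_pmap; apply/mapP/idP => [[k] | /decreasing_run_complete [k k_in <-]].
  by rewrite mem_iota => k_in /esym /nss_run_sound; apply; arith.
by exists k; rewrite // mem_iota; arith.
Qed.

Lemma uniq_nss_runs : uniq (pmap nss_run (iota 1 n)).
Proof.
rewrite -(map_inj_uniq Some_inj) pmapS_filter map_inj_in_uniq ?filter_uniq ?iota_uniq //.
move=> k1 k2; rewrite !mem_filter !mem_iota /= => /andP[+ k1_in] /andP[+ k2_in].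
case e1 : (nss_run k1) => [t|] // _; case e2 : (nss_run k2) => // _ e12.
by apply: (nss_run_inj _ _ e1); rewrite ?e2 ?e12 //; arith.
Qed.
End Suffixes.

(** * The word-RAM program *)

(* Registers: [0] = n, [1] = 1, [2] = n + 1, [3] = 2n, [4] = k, [5] = test,
   [6] = nss[k], [7] = p, [8] = L, [10] = R; register 9 is never written, so
   the first instruction reads n from address 0.  Instruction 5 is the loop head:
     for k = 1 to n:
       if nss[k] <> n + 1 then
         p := nss[k] - k; L := mem[n + k]; R := mem[2n + k];
         if L <= p < L + R then output k + 1 - L, nss[k] + R - 1, p *)
Definition scan_prog : seq instr :=
 [:: ILoad 0 9; IConst 1 1; IAdd 2 0 1; IAdd 3 0 0; IConst 4 1;
     ILt 5 0 4; IJz 5 8; IHalt; ILoad 6 4; IEq 5 6 2;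
     IJz 5 12; IJmp 30; ISub 7 6 4; IAdd 5 0 4; ILoad 8 5;
     IAdd 5 3 4; ILoad 10 5; ILt 5 7 8; IJz 5 20; IJmp 30;
     IAdd 11 8 10; ILt 5 7 11; IJz 5 30; IAdd 12 4 1; ISub 12 12 8;
     IOut 12; IAdd 12 6 10; ISub 12 12 1; IOut 12; IOut 7;
     IAdd 4 4 1; IJmp 5].

Section Exec.
Variables (P : seq instr) (slt : nat -> nat -> bool) (w : nat).

Lemma exec_step c c' m : step P slt w c = Some c' -> exec P slt w m.+1 c = exec P slt w m c'.
Proof. by move=> /= ->. Qed.

Lemma exec0 c : exec P slt w 0 c = c.
Proof. by []. Qed.

Lemma exec_halted c m : step P slt w c = None -> exec P slt w m c = c.
Proof. by case: m => //= m ->. Qed.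

Lemma exec_add a b c : exec P slt w (a + b) c = exec P slt w b (exec P slt w a c).
Proof.
elim: a c => [|a IH] c //=; case E: (step P slt w c) => [c'|]; first exact: IH.
by rewrite exec_halted.
Qed.

End Exec.

Arguments exec : simpl never.

Ltac exec_symbolic facts :=
  repeat (erewrite exec_step; last (rewrite /step /=; reflexivity);
          rewrite /upd /= ?facts /=);
  try rewrite exec0.

Section Scan.
Context {disp : Order.disp_t} {T : orderType disp}.
Variables (S : seq T) (w : nat).
Local Notation n := (size S).
Hypothesis word_size : 4 * n.+1 <= 2 ^ w.
Local Notation run := (exec scan_prog (sym_lt S) w).

Definition scan_output k :=
  flatten [seq [:: t.1.1; t.1.2; t.2] | t <- pmap (nss_run S) (iota 1 k.-1)].

Definition scan_inv c k := [/\ pc c = 5,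
  [/\ regs c 0 = n, regs c 1 = 1, regs c 2 = n.+1, regs c 3 = n + n & regs c 4 = k],
  Defs.mem c = input_mem S, out c = scan_output k &
  maxaddr c <= 3 * n /\ 1 <= k <= n.+1].

Lemma word_mod v : v <= 3 * n + 3 -> v %% 2 ^ w = v.
Proof. by move=> v_le; rewrite modn_small //; arith. Qed.

Lemma input_mem_nss k : 1 <= k <= n -> input_mem S k = nss S k.
Proof. by case/andP=> k1 kn; rewrite /input_mem gtn_eqF // kn. Qed.

Lemma input_mem_llce k : 1 <= k <= n -> nss S k != n.+1 ->
  input_mem S (n + k) = llce S k (nss S k).
Proof.
move=> k_in q_ne; rewrite /input_mem addn_eq0 (gtn_eqF (_ : 0 < k)) ?andbF; last by arith.
have -> : (n + k <= n) = false by apply/negbTE; rewrite -ltnNge; arith.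
have -> : n + k <= 2 * n by arith.
by rewrite addKn q_ne.
Qed.

Lemma input_mem_rlce k : 1 <= k <= n -> nss S k != n.+1 ->
  input_mem S (n + n + k) = rlce S k (nss S k).
Proof.
move=> k_in q_ne; rewrite /input_mem !addn_eq0 (gtn_eqF (_ : 0 < k)) ?andbF; last by arith.
have -> : (n + n + k <= n) = false by apply/negbTE; rewrite -ltnNge; arith.
have -> : (n + n + k <= 2 * n) = false by apply/negbTE; rewrite -ltnNge; arith.
have -> : n + n + k <= 3 * n by arith.
have -> : n + n + k - 2 * n = k by arith.
by rewrite q_ne.
Qed.

Lemma scan_output_succ k : 1 <= k -> scan_output k.+1 =
  scan_output k ++ oapp (fun t => [:: t.1.1; t.1.2; t.2]) [::] (nss_run S k).
Proof.
move=> k1; rewrite /scan_output /=.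
have -> : iota 1 k = iota 1 k.-1 ++ [:: k].
  by have := iotaD 1 k.-1 1; rewrite addn1 add1n prednK.
by rewrite pmap_cat map_cat flatten_cat /=; case: nss_run => //=; rewrite cats0.
Qed.

Lemma scan_init : scan_inv (run 5 (init_config S)) 1.
Proof.
have W1 : 1 %% 2 ^ w = 1 by rewrite word_mod //; arith.
have Wn1 : (n + 1) %% 2 ^ w = n.+1 by rewrite word_mod addn1 //; arith.
have Wnn : (n + n) %% 2 ^ w = n + n by rewrite word_mod //; arith.
rewrite /init_config; exec_symbolic (W1, Wn1, Wnn).
by split.
Qed.

Section Iteration.
Variables (k : nat) (rg M : nat -> nat) (O : seq nat) (mx : nat).
Hypotheses (rg0 : rg 0 = n) (rg1 : rg 1 = 1) (rg2 : rg 2 = n.+1) (rg3 : rg 3 = n + n).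
Hypotheses (rg4 : rg 4 = k) (HM : M = input_mem S) (HO : O = scan_output k).
Hypotheses (Hmx : mx <= 3 * n) (k_in : 1 <= k <= n).
Local Notation c := (Config 5 rg M O mx).
Local Notation q := (nss S k).
Local Notation L := (llce S k q).
Local Notation R := (rlce S k q).

Let M0 : M 0 = n. Proof. by rewrite HM. Qed.
Let Mk : M k = q. Proof. by rewrite HM input_mem_nss. Qed.
Let nk : (n < k) = false. Proof. by apply/negbTE; rewrite -leqNgt; case/andP: k_in. Qed.
Let Wk1 : (k + 1) %% 2 ^ w = k.+1. Proof. by rewrite word_mod addn1 //; arith. Qed.
Let out_next o : nss_run S k = o ->
  O ++ oapp (fun t => [:: t.1.1; t.1.2; t.2]) [::] o = scan_output k.+1.
Proof. by move=> <-; rewrite HO scan_output_succ //; arith. Qed.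

Lemma scan_iter_no_nss : q = n.+1 -> scan_inv (run 8 c) k.+1.
Proof.
move=> q_eq; exec_symbolic (rg0, rg1, rg2, rg3, rg4, M0, Mk, nk, q_eq, Wk1, eqxx).
split => //=; last by arith.
by rewrite -(@out_next None) ?cats0 // /nss_run q_eq eqxx.
Qed.

Lemma scan_iter_nss : q != n.+1 -> exists2 m, m <= 24 & scan_inv (run m c) k.+1.
Proof.
move=> q_ne; have [/andP[kq q_le] _ _] := nss_spec k_in.
have qn : q <= n by move: q_ne q_le; rewrite neq_ltn; arith.
have L_le : L <= k by apply: llce_leq; arith.
have R_le : R <= n.+1 - q by apply: rlce_leq; arith.
have ML : M (n + k) = L by rewrite HM input_mem_llce.
have MR : M (n + n + k) = R by rewrite HM input_mem_rlce.
have Wnk : (n + k) %% 2 ^ w = n + k by rewrite word_mod //; arith.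
have Wnnk : (n + n + k) %% 2 ^ w = n + n + k by rewrite word_mod //; arith.
have WLR : (L + R) %% 2 ^ w = L + R by rewrite word_mod //; arith.
have WqR : (q + R) %% 2 ^ w = q + R by rewrite word_mod //; arith.
have q_neF : (q == n.+1) = false by apply/negbTE.
have facts := (rg0, rg1, rg2, rg3, rg4, M0, Mk, nk, q_neF, Wk1, ML, MR, Wnk, Wnnk, WLR, WqR, eqxx).
have [L_gt|L_le_p] := ltnP (q - k) L.
  exists 15 => //; exec_symbolic (facts, L_gt).
  split => //=; last by arith.
  by rewrite -(@out_next None) ?cats0 // /nss_run q_neF L_gt.
have L_gtF : (q - k < L) = false by apply/negbTE; rewrite -leqNgt.
have [LR_gt|LR_le] := ltnP (q - k) (L + R).
  exists 24 => //; exec_symbolic (facts, L_gtF, LR_gt).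
  split => //=; last by arith.
  rewrite -(@out_next (Some (k.+1 - L, q + R - 1, q - k))) /=; first by rewrite -!cats1 -!catA.
  by rewrite /nss_run q_neF L_gtF LR_gt.
have LR_gtF : (q - k < L + R) = false by apply/negbTE; rewrite -leqNgt.
exists 17 => //; exec_symbolic (facts, L_gtF, LR_gtF).
split => //=; last by arith.
by rewrite -(@out_next None) ?cats0 // /nss_run q_neF L_gtF LR_gtF.
Qed.

End Iteration.

Lemma scan_iter c k : scan_inv c k -> k <= n ->
  exists2 m, m <= 24 & scan_inv (run m c) k.+1.
Proof.
case: c => pc0 rg M O mx [/= -> [rg0 rg1 rg2 rg3 rg4] HM HO [Hmx Hk]] kn.
have k_in : 1 <= k <= n by arith.
have [q_eq|q_ne] := eqVneq (nss S k) n.+1; last exact: scan_iter_nss.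
by exists 8 => //; apply: scan_iter_no_nss.
Qed.

Lemma scan_loop d c k : k + d = n.+1 -> scan_inv c k ->
  exists2 t, t <= 24 * d & scan_inv (run t c) n.+1.
Proof.
elim: d c k => [|d IH] c k kd inv; first by exists 0; rewrite // exec0 -kd addn0.
have kn : k <= n by case: inv => _ _ _ _ []; arith.
have [m m_le inv'] := scan_iter inv kn.
have [t t_le inv''] := IH _ k.+1 ltac:(arith) inv'.
by exists (m + t); [arith | rewrite exec_add].
Qed.

Lemma scan_halt c : scan_inv c n.+1 -> let c' := run 2 c in
  [/\ halted scan_prog (sym_lt S) w c', out c' = out c & maxaddr c' = maxaddr c].
Proof.
by case: c => pc0 R M O mx [/= -> [R0 _ _ _ R4] _ _ _]; exec_symbolic (R0, R4, ltnSn).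
Qed.

End Scan.

Lemma scan_output_correct disp (T : orderType disp) (S : seq T) :
  outputs_decreasing_runs S (scan_output S (size S).+1).
Proof.
exists (pmap (nss_run S) (iota 1 (size S))); split=> //.
  by case: S => [|x0 s]; [|exact: uniq_nss_runs].
move=> i j p; case: S => [|x0 s]; last exact: mem_nss_runs.
apply/esym/negP => /andP[/andP[/and5P[i1 ij j0 _ _] _] _].
by move: j0; rewrite leqn0 => /eqP j0; arith.
Qed.

Theorem lemma9 :
  exists (P : seq instr) (c : nat),
    forall (disp : Order.disp_t) (T : orderType disp) (S : seq T) (w : nat),
      (4 * (size S).+1 <= 2 ^ w)%N ->
      exists t : nat,
        let fin := exec P (sym_lt S) w t (init_config S) in
        [/\ (t <= c * size S + c)%N,
            halted P (sym_lt S) w fin,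
            (maxaddr fin <= c * size S + c)%N &
            outputs_decreasing_runs S (out fin)].
Proof.
exists scan_prog, 40 => disp T S w word_size.
have [t t_le inv] := scan_loop word_size (d := size S) (add1n _) (scan_init word_size).
have [halt_fin out_fin addr_fin] := scan_halt w inv.
exists (5 + t + 2); rewrite /= !exec_add; split => //; first by arith.
  by rewrite addr_fin; case: inv => _ _ _ _ []; arith.
by rewrite out_fin; case: inv => _ _ _ -> _; apply: scan_output_correct.
Qed.
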